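(* Let $\mathcal{M}$ be a circular orientable embedding of type $(k,d)$ of a connected graph $X$. If $\mathcal{M}$ is orientably-regular, then: - the vertex-face incidence graph of $\mathcal{M}$ is edge-transitive; - the $H$-digraph of $\mathcal{M}$ is vertex-transitive.
   Context: Setting. A circular embedding is a cellular embedding in which every face is bounded by a cycle. It has type $(k,d)$ if every vertex has $d$ neighbours and every face uses $k$ vertices. $\mathcal{M}$ is orientably-regular if its group of orientation-preserving automorphisms acts regularly on the arcs (ordered pairs $(u,v)$ with $\{u,v\}$ an edge). Vertex-face incidence graph. This is the bipartite graph on the vertices and faces of $\mathcal{M}$, with a vertex adjacent to a face iff it lies on it. Vertex-face transition matrix. Fix a consistent orientation of the faces, so that each edge shared by two faces receives opposite directions in them. Let $M$ be the arc-face incidence matrix and $N$ the arc-tail incidence matrix. The transition matrix is $U=(\tfrac2kMM^T-I)(\tfrac2dNN^T-I)$. $H$-digraph. The principal Hamiltonian of a unitary $V=\sum_r\alpha_rF_r$ (spectral decomposition) is $H=-i\sum_r\log(\alpha_r)F_r$, with the branch chosen so that $-\pi<-i\log(\alpha_r)\le\pi$; it satisfies $V=\exp(iH)$. The $H$-digraph of $\mathcal{M}$ is the weighted digraph on the arcs of $X$ whose weighted adjacency matrix is the principal Hamiltonian $H$ of $U^2$; there is an arc $a\to b$ iff $H_{a,b}\neq0$. *)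

From HB Require Import structures.
From mathcomp Require Import all_boot all_order all_algebra all_fingroup.
From mathcomp Require Import reals exp trigo.
From mathcomp Require Import complex.
Set Implicit Arguments.
Unset Strict Implicit.
Unset Printing Implicit Defensive.
Import Order.TTheory GRing.Theory Num.Theory.
Local Open Scope ring_scope.

Definition Arc (V : finType) (adj : rel V) := {p : V * V | adj p.1 p.2}.

Definition tail (V : finType) (adj : rel V) (a : Arc adj) : V := (val a).1.
Definition head (V : finType) (adj : rel V) (a : Arc adj) : V := (val a).2.

(** reverse arc (v,u) of (u,v) (adj is assumed symmetric) *)
Definition rev_arc (V : finType) (adj : rel V) (a : Arc adj) : Arc adj :=
  insubd a (head a, tail a).

Definition arc_map (V : finType) (adj : rel V) (g : {perm V}) (a : Arc adj)
  : Arc adj := insubd a (g (tail a), g (head a)).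

(* Orientable embeddings as rotation systems: sigma is a permutation   *)
(* of the arcs which fixes tails and cyclically permutes the arcs      *)
(* leaving each vertex (the local rotation at that vertex).            *)

Definition rotation_system (V : finType) (adj : rel V) (sigma : {perm Arc adj})
  : Prop :=
  (forall a, tail (sigma a) = tail a) /\
  (forall a b, tail a = tail b -> fconnect sigma a b).

(** face-traversal permutation: the arc (u,v) is followed on its face
    by the arc sigma (v,u) = (v,w). Faces are the orbits, with the
    induced (consistent) orientation. *)
Definition face_succ (V : finType) (adj : rel V) (sigma : {perm Arc adj})
  (a : Arc adj) : Arc adj := sigma (rev_arc a).

Definition face_of (V : finType) (adj : rel V) (sigma : {perm Arc adj})
  (a : Arc adj) : {set Arc adj} := [set b | fconnect (face_succ sigma) a b].

Definition faces (V : finType) (adj : rel V) (sigma : {perm Arc adj})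
  : {set {set Arc adj}} := [set face_of sigma a | a : Arc adj].

Definition face (V : finType) (adj : rel V) (sigma : {perm Arc adj}) :=
  {F : {set Arc adj} | F \in faces sigma}.

Definition face_vertices (V : finType) (adj : rel V) (sigma : {perm Arc adj})
  (F : {set Arc adj}) : {set V} := (@tail V adj) @: F.

(** circular: every facial walk is a cycle (its vertices are pairwise
    distinct, and it has length at least 3). *)
Definition circular (V : finType) (adj : rel V) (sigma : {perm Arc adj})
  : Prop :=
  forall F, F \in faces sigma ->
    {in F &, injective (@tail V adj)} /\ (3 <= #|F|)%N.

Definition has_type (V : finType) (adj : rel V) (sigma : {perm Arc adj})
  (k d : nat) : Prop :=
  (forall v : V, #|[set w | adj v w]| = d) /\
  (forall F, F \in faces sigma -> #|face_vertices sigma F| = k).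

Definition op_aut (V : finType) (adj : rel V) (sigma : {perm Arc adj})
  (g : {perm V}) : Prop :=
  (forall u v, adj (g u) (g v) = adj u v) /\
  (forall a, arc_map g (sigma a) = sigma (arc_map g a)).

Definition orientably_regular (V : finType) (adj : rel V)
  (sigma : {perm Arc adj}) : Prop :=
  forall a b : Arc adj, exists! g : {perm V}, op_aut sigma g /\ arc_map g a = b.

Definition vf_incidence (V : finType) (adj : rel V) (sigma : {perm Arc adj})
  : rel (V + face sigma) :=
  fun x y => match x, y with
  | inl v, inr F => v \in face_vertices sigma (val F)
  | inr F, inl v => v \in face_vertices sigma (val F)
  | _, _ => false
  end.

Definition graph_aut (T : finType) (e : rel T) (g : {perm T}) : Prop :=
  forall x y, e (g x) (g y) = e x y.

Definition edge_transitive (T : finType) (e : rel T) : Prop :=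
  forall x y x' y', e x y -> e x' y' ->
    exists g : {perm T}, graph_aut e g /\
      ((g x = x' /\ g y = y') \/ (g x = y' /\ g y = x')).

(* Matrices over the complex numbers R[i]; arcs are indexed by         *)
(* 'I_#|arc| via enum_val.                                             *)

Local Open Scope complex_scope.

Definition arc_face_mx (R : realType) (V : finType) (adj : rel V)
  (sigma : {perm Arc adj}) : 'M[R[i]]_(#|{: Arc adj}|, #|{: face sigma}|) :=
  \matrix_(i, j) ((enum_val (A := {: Arc adj}) i \in val (enum_val (A := {: face sigma}) j) : bool)%:R).

Definition arc_tail_mx (R : realType) (V : finType) (adj : rel V)
  : 'M[R[i]]_(#|{: Arc adj}|, #|{: V}|) :=
  \matrix_(i, j) ((tail (enum_val (A := {: Arc adj}) i) == enum_val (A := {: V}) j)%:R).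

Definition transition_mx (R : realType) (V : finType) (adj : rel V)
  (sigma : {perm Arc adj}) (k d : nat) : 'M[R[i]]_(#|{: Arc adj}|) :=
  (((2%:R / k%:R) *: (arc_face_mx R sigma *m (arc_face_mx R sigma)^T)
      - 1%:M) *m
   ((2%:R / d%:R) *: (arc_tail_mx R adj *m (arc_tail_mx R adj)^T) - 1%:M)).

Definition cmod (R : realType) (z : R[i]) : R :=
  Num.sqrt ((@complex.Re R z) ^+ 2 + (@complex.Im R z) ^+ 2).
Definition cconj (R : realType) (z : R[i]) : R[i] := ((@complex.Re R z)) -i* ((@complex.Im R z)).

(** principal argument in (-pi, pi] of a nonzero complex number *)
Definition parg (R : realType) (z : R[i]) : R :=
  let r := cmod z in
  if 0 <= (@complex.Im R z) then acos ((@complex.Re R z) / r) else - acos ((@complex.Re R z) / r).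

(** -i log(z) for the principal branch: log z = ln|z| + i arg z *)
Definition neg_i_plog (R : realType) (z : R[i]) : R[i] :=
  (parg z) -i* (ln (cmod z)).

Definition conjT (R : realType) (n : nat) (A : 'M[R[i]]_n) : 'M[R[i]]_n :=
  map_mx (@cconj R) A^T.

Definition principal_hamiltonian (R : realType) (n : nat)
  (W H : 'M[R[i]]_n) : Prop :=
  exists (m : nat) (alpha : 'I_m -> R[i]) (F : 'I_m -> 'M[R[i]]_n),
    [/\ injective alpha,
        forall r, F r != 0,
        forall r, F r *m F r = F r,
        forall r, conjT (F r) = F r &
        forall r s, r != s -> F r *m F s = 0] /\
    [/\ \sum_(r < m) F r = 1%:M,
        W = \sum_(r < m) alpha r *: F r &
        H = \sum_(r < m) neg_i_plog (alpha r) *: F r].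

Definition wdigraph_vertex_transitive (C : Type) (n : nat) (H : 'M[C]_n)
  : Prop :=
  forall i j : 'I_n, exists g : 'S_n,
    g i = j /\ forall x y, H (g x) (g y) = H x y.

From Pilot Require Import Defs.
From HB Require Import structures.
From mathcomp Require Import all_boot all_order all_algebra all_fingroup.
From mathcomp Require Import reals exp trigo.
From mathcomp Require Import complex.
Import Order.TTheory GRing.Theory Num.Theory.
Set Implicit Arguments.
Unset Strict Implicit.
Unset Printing Implicit Defensive.

(* An orientation-preserving automorphism g commutes with the face-traversal
   permutation, so it maps faces to faces and preserves vertex-face incidence.
   Every incidence (v, F) is the tail and face of some arc, and these
   automorphisms are transitive on arcs, hence on incidences.
   On the matrix side, the permutation of arcs induced by g preserves both
   M M^T and N N^T, so its permutation matrix commutes with U and with U^2.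
   A matrix commuting with a diagonalisable W commutes with the spectral
   projections of W, hence with every H = sum_r f(alpha_r) F_r; so the weights
   of the H-digraph are invariant under an arc-transitive group. *)

Section ArcMap.

Variables (V : finType) (adj : rel V).

Lemma val_rev_arc (a : Arc adj) :
  symmetric adj -> val (rev_arc a) = (Defs.head a, tail a).
Proof.
by move=> adj_sym; rewrite /rev_arc insubdK // unfold_in /= adj_sym; case: a.
Qed.

Variable g : {perm V}.
Hypothesis g_aut : graph_aut adj g.

Lemma val_arc_map (a : Arc adj) : val (arc_map g a) = (g (tail a), g (Defs.head a)).
Proof. by rewrite /arc_map insubdK // unfold_in /= g_aut; case: a. Qed.

Lemma tail_arc_map (a : Arc adj) : tail (arc_map g a) = g (tail a).
Proof. by rewrite /tail val_arc_map. Qed.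

Lemma arc_map_inj : injective (arc_map (adj := adj) g).
Proof.
move=> [[u v] a_uv] [[u' v'] a_uv'] /(congr1 val).
rewrite !val_arc_map /tail /Defs.head /= => -[/perm_inj eq_u /perm_inj eq_v].
by apply: val_inj; rewrite /= eq_u eq_v.
Qed.

Lemma arc_map_rev (a : Arc adj) :
  symmetric adj -> arc_map g (rev_arc a) = rev_arc (arc_map g a).
Proof.
move=> adj_sym; apply: val_inj.
by rewrite val_arc_map val_rev_arc // /tail /Defs.head val_rev_arc // val_arc_map.
Qed.

End ArcMap.

Section FaceMap.

Variables (V : finType) (adj : rel V) (sigma : {perm Arc adj}).
Hypothesis adj_sym : symmetric adj.

Lemma rev_arc_inj : injective (@rev_arc V adj).
Proof.
move=> [[u v] a_uv] [[u' v'] a_uv'] /(congr1 val).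
rewrite !val_rev_arc // /tail /Defs.head /= => -[eq_v eq_u].
by apply: val_inj; rewrite /= eq_u eq_v.
Qed.

Lemma face_succ_inj : injective (face_succ sigma).
Proof. by move=> a b /perm_inj /rev_arc_inj. Qed.

Lemma face_of_mem F a : F \in faces sigma -> a \in F -> face_of sigma a = F.
Proof.
move=> /imsetP [b _ ->]; rewrite inE => b_a; apply/setP => c; rewrite !inE.
have sym : connect_sym (frel (face_succ sigma)).
  by move=> x y; apply: fconnect_sym; apply: face_succ_inj.
by rewrite (same_connect sym b_a).
Qed.

Variable g : {perm V}.
Hypothesis g_op : op_aut sigma g.

Lemma arc_map_face_succ a :
  arc_map g (face_succ sigma a) = face_succ sigma (arc_map g a).
Proof. by rewrite /face_succ g_op.2 arc_map_rev //; apply: g_op.1. Qed.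

Lemma arc_map_iter_face_succ n a :
  arc_map g (iter n (face_succ sigma) a) = iter n (face_succ sigma) (arc_map g a).
Proof. by elim: n => //= n IHn; rewrite arc_map_face_succ IHn. Qed.

Lemma face_of_arc_map a : face_of sigma (arc_map g a) = arc_map g @: face_of sigma a.
Proof.
apply/setP => b; rewrite inE; apply/idP/imsetP => [/iter_findex <- | [c]].
  exists (iter (findex (face_succ sigma) (arc_map g a) b) (face_succ sigma) a).
    by rewrite inE fconnect_iter.
  by rewrite arc_map_iter_face_succ.
by rewrite inE => /iter_findex <- ->; rewrite arc_map_iter_face_succ fconnect_iter.
Qed.

Lemma arc_map_faces F : F \in faces sigma -> arc_map g @: F \in faces sigma.
Proof. by move=> /imsetP [a _ ->]; rewrite -face_of_arc_map imset_f. Qed.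

Definition face_map (F : face sigma) : face sigma := insubd F (arc_map g @: val F).

Lemma val_face_map F : val (face_map F) = arc_map g @: val F.
Proof. by rewrite /face_map insubdK // unfold_in /= arc_map_faces ?(valP F). Qed.

Lemma face_map_inj : injective face_map.
Proof.
move=> F G /(congr1 val); rewrite !val_face_map => /imset_inj eq_FG.
by apply/val_inj/eq_FG/arc_map_inj/g_op.1.
Qed.

Lemma face_vertices_arc_map (F : {set Arc adj}) v :
  (g v \in face_vertices sigma (arc_map g @: F)) = (v \in face_vertices sigma F).
Proof.
rewrite /face_vertices -imset_comp (eq_imset (g := g \o @tail V adj)).
  by rewrite imset_comp mem_imset //; apply: perm_inj.
by move=> a /=; rewrite tail_arc_map //; apply: g_op.1.
Qed.

Definition vf_map (x : V + face sigma) : V + face sigma :=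
  match x with inl v => inl (g v) | inr F => inr (face_map F) end.

Lemma vf_map_inj : injective vf_map.
Proof. by move=> [u|F] [v|G] //= [] => [/perm_inj | /face_map_inj] ->. Qed.

Lemma vf_map_aut : graph_aut (@vf_incidence V adj sigma) (perm vf_map_inj).
Proof. by move=> [u|F] [v|G]; rewrite !permE //= val_face_map face_vertices_arc_map. Qed.

End FaceMap.

Lemma vf_incidence_flag_transitive (V : finType) (adj : rel V)
    (sigma : {perm Arc adj}) (v v' : V) (F F' : face sigma) :
  symmetric adj -> orientably_regular sigma ->
  v \in face_vertices sigma (val F) -> v' \in face_vertices sigma (val F') ->
  exists2 G : {perm V + face sigma}, graph_aut (@vf_incidence V adj sigma) G &
    G (inl v) = inl v' /\ G (inr F) = inr F'.
Proof.
move=> adj_sym M_reg /imsetP [a a_F ->] /imsetP [a' a'_F' ->].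
have [g [[g_op g_a] _]] := M_reg a a'.
exists (perm (vf_map_inj adj_sym g_op)); first exact: vf_map_aut.
rewrite !permE /= -g_a tail_arc_map; last exact: g_op.1.
split=> //; congr inr; apply: val_inj.
rewrite val_face_map // -(face_of_mem adj_sym (valP F) a_F) -face_of_arc_map // g_a.
exact: face_of_mem (valP F') a'_F'.
Qed.

Lemma vf_incidence_edge_transitive (V : finType) (adj : rel V)
    (sigma : {perm Arc adj}) :
  symmetric adj -> orientably_regular sigma ->
  edge_transitive (@vf_incidence V adj sigma).
Proof.
move=> adj_sym M_reg [v|F] [w|G] [v'|F'] [w'|G'] //= inc inc';
  have [H H_aut [H_v H_F]] := vf_incidence_flag_transitive adj_sym M_reg inc inc';
  by exists H; split; [|by [left | right]].
Qed.

Local Open Scope ring_scope.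

Lemma comm_mxZ (C : comPzRingType) n (c : C) (P A : 'M[C]_n) :
  comm_mx P A -> comm_mx P (c *: A).
Proof. by rewrite /comm_mx -scalemxAr -scalemxAl => ->. Qed.

Lemma comm_perm_mxP (C : pzRingType) n (s : 'S_n) (A : 'M[C]_n) :
  comm_mx (perm_mx s) A <-> forall x y, A (s x) (s y) = A x y.
Proof.
rewrite /comm_mx -row_permE -[s in A *m perm_mx s]invgK -col_permE.
split=> [/matrixP sA x y | sA].
  by have := sA x (s y); rewrite !mxE permK.
by apply/matrixP => x y; rewrite !mxE -{1}(permKV s y) sA.
Qed.

Lemma comm_perm_mx_mulmx_tr (C : pzRingType) m n (M : 'M[C]_(m, n))
    (p : 'S_m) (q : 'S_n) :
  (forall i j, M (p i) (q j) = M i j) ->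
  comm_mx (perm_mx p) (M *m M^T).
Proof.
move=> pqM; apply/comm_perm_mxP => x y; rewrite !mxE (reindex_inj (@perm_inj _ q)).
by apply: eq_bigr => j _; rewrite !mxE !pqM.
Qed.

Section SpectralCommute.

Variables (C : fieldType) (n m : nat) (alpha : 'I_m -> C) (F : 'I_m -> 'M[C]_n).
Hypotheses (alpha_inj : injective alpha) (F_idem : forall r, F r *m F r = F r).
Hypothesis F_orth : forall r s, r != s -> F r *m F s = 0.
Hypothesis F_sum : \sum_(r < m) F r = 1%:M.

Let W := \sum_(r < m) alpha r *: F r.

Lemma mul_spectral_proj_mx r : F r *m W = alpha r *: F r.
Proof.
rewrite mulmx_sumr (bigD1 r) //= big1 ?addr0 => [|s sr]; rewrite -scalemxAr.
  by rewrite F_idem.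
by rewrite F_orth 1?eq_sym // scaler0.
Qed.

Lemma mul_mx_spectral_proj r : W *m F r = alpha r *: F r.
Proof.
rewrite mulmx_suml (bigD1 r) //= big1 ?addr0 => [|s sr]; rewrite -scalemxAl.
  by rewrite F_idem.
by rewrite F_orth // scaler0.
Qed.

Lemma comm_mx_spectral_proj P r : comm_mx P W -> comm_mx P (F r).
Proof.
move=> PW.
have F_P_F s t : s != t -> F s *m P *m F t = 0.
  move=> st; apply/eqP.
  have : alpha s *: (F s *m P *m F t) = alpha t *: (F s *m P *m F t).
    rewrite !(scalemxAl (alpha s)) -mul_spectral_proj_mx -(mulmxA (F s)) -PW.
    by rewrite mulmxA -mulmxA mul_mx_spectral_proj scalemxAr.
  move/eqP; rewrite -subr_eq0 -scalerBl scalemx_eq0 subr_eq0.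
  by rewrite (inj_eq alpha_inj) (negbTE st).
rewrite /comm_mx; transitivity (F r *m P *m F r).
  rewrite -[P *m F r]mul1mx -F_sum mulmxA !mulmx_suml (bigD1 r) //= big1 ?addr0 //.
  by move=> s; apply: F_P_F.
rewrite -[RHS]mulmx1 -F_sum mulmx_sumr (bigD1 r) //= big1 ?addr0 //.
by move=> s s_r; rewrite F_P_F // eq_sym.
Qed.

Lemma comm_mx_spectral_sum P (beta : 'I_m -> C) :
  comm_mx P W -> comm_mx P (\sum_(r < m) beta r *: F r).
Proof.
by move=> PW; apply: comm_mx_sum => r _; apply/comm_mxZ/comm_mx_spectral_proj.
Qed.

End SpectralCommute.

Lemma principal_hamiltonian_comm (R : realType) n (W H P : 'M[R[i]]_n) :
  principal_hamiltonian W H -> comm_mx P W -> comm_mx P H.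
Proof.
move=> [m [alpha [F [[alpha_inj _ F_idem _ F_orth] [F_sum -> ->]]]]].
exact: comm_mx_spectral_sum.
Qed.

Section EnumPerm.

Variables (T : finType) (f : T -> T).
Hypothesis f_inj : injective f.

Definition enum_fun (i : 'I_#|{: T}|) : 'I_#|{: T}| := enum_rank (f (enum_val i)).

Lemma enum_fun_inj : injective enum_fun.
Proof. by move=> i j /(congr1 enum_val); rewrite !enum_rankK => /f_inj/enum_val_inj. Qed.

Definition enum_perm : 'S_#|{: T}| := perm enum_fun_inj.

Lemma enum_val_perm i : enum_val (enum_perm i) = f (enum_val i).
Proof. by rewrite permE enum_rankK. Qed.

End EnumPerm.

Lemma comm_perm_mx_transition (R : realType) (V : finType) (adj : rel V)
    (sigma : {perm Arc adj}) (k d : nat) (g : {perm V}) (adj_sym : symmetric adj)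
    (g_op : op_aut sigma g) :
  comm_mx (perm_mx (enum_perm (arc_map_inj g_op.1))) (transition_mx R sigma k d).
Proof.
have M_inv : comm_mx (perm_mx (enum_perm (arc_map_inj g_op.1)))
    (arc_face_mx R sigma *m (arc_face_mx R sigma)^T).
  apply: (comm_perm_mx_mulmx_tr (q := enum_perm (face_map_inj adj_sym g_op))) => i j.
  rewrite !mxE !enum_val_perm val_face_map //.
  by rewrite mem_imset //; apply/arc_map_inj/g_op.1.
have N_inv : comm_mx (perm_mx (enum_perm (arc_map_inj g_op.1)))
    (arc_tail_mx R adj *m (arc_tail_mx R adj)^T).
  apply: (comm_perm_mx_mulmx_tr (q := enum_perm (@perm_inj _ g))) => i j.
  by rewrite !mxE !enum_val_perm tail_arc_map ?(inj_eq perm_inj) //; apply: g_op.1.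
by apply: comm_mxM; apply: comm_mxB;
  [exact: comm_mxZ _ M_inv | exact: comm_mx1 | exact: comm_mxZ _ N_inv | exact: comm_mx1].
Qed.

Lemma hamiltonian_vertex_transitive (R : realType) (V : finType) (adj : rel V)
    (sigma : {perm Arc adj}) (k d : nat) (H : 'M[R[i]]_#|{: Arc adj}|) :
  symmetric adj -> orientably_regular sigma ->
  principal_hamiltonian (transition_mx R sigma k d *m transition_mx R sigma k d) H ->
  wdigraph_vertex_transitive H.
Proof.
move=> adj_sym M_reg ham_H i j.
have [g [[g_op g_ij] _]] := M_reg (enum_val i) (enum_val j).
exists (enum_perm (arc_map_inj g_op.1)); split.
  by apply: enum_val_inj; rewrite enum_val_perm.
apply/comm_perm_mxP/(principal_hamiltonian_comm ham_H).
by apply: comm_mxM; apply: comm_perm_mx_transition.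
Qed.

Theorem theorem5p1 (R : realType) (V : finType) (adj : rel V)
  (sigma : {perm Arc adj}) (k d : nat)
  (adj_sym : symmetric adj) (adj_irr : irreflexive adj)
  (X_conn : forall u v : V, connect adj u v)
  (M_rot : rotation_system sigma) (M_circ : circular sigma)
  (M_type : has_type sigma k d)
  (M_reg : orientably_regular sigma) :
  edge_transitive (@vf_incidence V adj sigma) /\
  (forall H, principal_hamiltonian
               (transition_mx R sigma k d *m transition_mx R sigma k d) H ->
             wdigraph_vertex_transitive H).
Proof.
split; first exact: vf_incidence_edge_transitive.
by move=> H; apply: hamiltonian_vertex_transitive.
Qed.
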